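(* Let $M,N\ge1$, let $T_1,\dots,T_N\in\mathcal{L}(\ell^\infty_M,\mathbb{R})$, let $\mathscr{T}=\{T_n:1\le n\le N\}$, and let $A:\ell^\infty_M\to\ell^\infty_N$ be given by $Ax=(T_nx)_{n=1}^N$. Then $\mathcal{R}(\mathscr{T})=C_2(A)$ and $\mathcal{R}^\gamma(\mathscr{T})=C_2^\gamma(A)$.
   Context: $(r_n)$ is a Rademacher sequence and $(\gamma_n)$ a sequence of independent standard Gaussians. For a family $\mathscr{T}\subseteq\mathcal{L}(X,Y)$, the $R$-bound $\mathcal{R}(\mathscr{T})$ is the least $C$ such that $(\mathbb{E}\|\sum_{n=1}^k r_nS_nx_n\|^2)^{1/2}\le C(\mathbb{E}\|\sum_{n=1}^k r_nx_n\|^2)^{1/2}$ for all $k$, all $S_1,\dots,S_k\in\mathscr{T}$ (not necessarily distinct) and all $x_1,\dots,x_k\in X$; the $\gamma$-bound $\mathcal{R}^\gamma(\mathscr{T})$ is defined in the same way with Gaussians. For an operator $A\in\mathcal{L}(X,Y)$, $C_2(A)$ (Rademacher cotype 2 constant) is the least $C$ such that $(\sum_{n=1}^k\|Ax_n\|^2)^{1/2}\le C\|\sum_{n=1}^k r_nx_n\|_{L^2(\Omega;X)}$ for all $k$ and $x_1,\dots,x_k\in X$; $C_2^\gamma(A)$ is defined identically with $(\gamma_n)$ in place of $(r_n)$. *)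

From Stdlib Require Import Reals.
Open Scope R_scope.

Fixpoint sumR (k : nat) (f : nat -> R) : R :=
  match k with O => 0 | S k' => sumR k' f + f k' end.

Fixpoint supnorm (M : nat) (x : nat -> R) : R :=
  match M with O => 0 | S m => Rmax (supnorm m x) (Rabs (x m)) end.

Definition vcons (t : R) (e : nat -> R) : nat -> R :=
  fun i => match i with O => t | S i' => e i' end.

(* Expectation over k independent Rademacher variables r_0..r_{k-1}:
   average over all 2^k sign choices. *)
Fixpoint Erad (k : nat) (F : (nat -> R) -> R) : R :=
  match k with
  | O => F (fun _ => 0)
  | S k' => (Erad k' (fun e => F (vcons 1 e)) + Erad k' (fun e => F (vcons (-1) e))) / 2
  end.

Definition is_exp_rad (k : nat) (F : (nat -> R) -> R) (v : R) : Prop := v = Erad k F.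

(* Improper Riemann integral over R (symmetric truncation; used for
   nonnegative continuous integrands). *)
Definition improper_int (G : R -> R) (v : R) : Prop :=
  forall eps, 0 < eps -> exists A, forall a, A <= a ->
    exists pr : Riemann_integrable G (- a) a, Rabs (RiemannInt pr - v) < eps.

Definition gdens (t : R) : R := exp (- (t * t) / 2) / sqrt (2 * PI).

(* Expectation over k independent standard Gaussians g_0..g_{k-1},
   as an iterated integral against the Gaussian density. *)
Fixpoint is_exp_gauss (k : nat) (F : (nat -> R) -> R) (v : R) : Prop :=
  match k with
  | O => v = F (fun _ => 0)
  | S k' => exists G : R -> R,
      (forall t, is_exp_gauss k' (fun e => F (vcons t e)) (G t)) /\
      improper_int (fun t => gdens t * G t) v
  end.

(* A linear functional on ell^infty_M (vectors are nat -> R, only the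
   coordinates 0..M-1 are meaningful). *)
Definition lin_functional (M : nat) (T : (nat -> R) -> R) : Prop :=
  (forall x y, T (fun i => x i + y i) = T x + T y) /\
  (forall a x, T (fun i => a * x i) = a * T x) /\
  (forall x y, (forall i, (i < M)%nat -> x i = y i) -> T x = T y).

Definition rsum (k : nat) (r : nat -> R) (x : nat -> nat -> R) : nat -> R :=
  fun i => sumR k (fun j => r j * x j i).

(* C is an admissible R-bound (E = Rademacher) or gamma-bound (E = Gaussian)
   constant for the family {T_n : n < N} of functionals ell^infty_M -> R. *)
Definition Rbound_const (E : nat -> ((nat -> R) -> R) -> R -> Prop)
    (M N : nat) (T : nat -> (nat -> R) -> R) (C : R) : Prop :=
  forall (k : nat) (idx : nat -> nat) (x : nat -> nat -> R),
    (forall j, (j < k)%nat -> (idx j < N)%nat) ->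
    forall a b,
      E k (fun r => Rsqr (sumR k (fun j => r j * T (idx j) (x j)))) a ->
      E k (fun r => Rsqr (supnorm M (rsum k r x))) b ->
      sqrt a <= C * sqrt b.

Definition opA (T : nat -> (nat -> R) -> R) (x : nat -> R) : nat -> R :=
  fun n => T n x.

Definition cotype2_const (E : nat -> ((nat -> R) -> R) -> R -> Prop)
    (M N : nat) (A : (nat -> R) -> (nat -> R)) (C : R) : Prop :=
  forall (k : nat) (x : nat -> nat -> R) b,
    E k (fun r => Rsqr (supnorm M (rsum k r x))) b ->
    sqrt (sumR k (fun j => Rsqr (supnorm N (A (x j))))) <= C * sqrt b.

Definition is_least_const (P : R -> Prop) (c : R) : Prop :=
  P c /\ forall C, P C -> c <= C.

From Stdlib Require Import Reals Lra Lia FunctionalExtensionality.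
From Coquelicot Require Import Coquelicot.
From mathcomp Require all_boot all_order all_algebra all_classical all_reals all_analysis.
From mathcomp Require Rstruct Rstruct_topology.
Open Scope R_scope.

(* Rademacher signs and standard Gaussians are both orthonormal:
   E (sum_j r_j c_j)^2 = sum_j c_j^2.  Hence the left-hand side of the R-bound
   inequality for the functionals T_(n_j) is (sum_j |T_(n_j) x_j|^2)^(1/2), which is at
   most (sum_j |A x_j|_oo^2)^(1/2), with equality when every n_j attains
   |A x_j|_oo = max_n |T_n x_j|.  So both inequalities admit exactly the same
   constants, and in particular have the same least one.
   Gaussian orthonormality follows by integrating out one variable at a time, from
   int (a + t c)^2 gdens t dt = a^2 + c^2; the total mass of gdens comes from the
   Gaussian integral of MathComp-Analysis, transported to Coquelicot's Riemann
   integral. *)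

(** * Reduction to orthonormal expectations *)

Lemma sumR_ext k f g : (forall j, (j < k)%nat -> f j = g j) -> sumR k f = sumR k g.
Proof.
induction k as [|k IH]; simpl; intros H; [reflexivity|].
rewrite IH by (intros j Hj; apply H; lia). rewrite H by lia. reflexivity.
Qed.

Lemma sumR_le k f g : (forall j, (j < k)%nat -> f j <= g j) -> sumR k f <= sumR k g.
Proof.
induction k as [|k IH]; simpl; intros H; [lra|].
apply Rplus_le_compat; [apply IH; intros j Hj|]; apply H; lia.
Qed.

Lemma sumR_shift k f : sumR (S k) f = f O + sumR k (fun j => f (S j)).
Proof. induction k as [|k IH]; simpl in *; [ring|]. rewrite IH. ring. Qed.

Lemma supnorm_ge0 M y : 0 <= supnorm M y.
Proof.
induction M as [|M IH]; simpl; [lra|]. eapply Rle_trans; [apply IH|apply Rmax_l].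
Qed.

Lemma Rabs_le_supnorm M y n : (n < M)%nat -> Rabs (y n) <= supnorm M y.
Proof.
induction M as [|M IH]; intros Hn; [lia|]. simpl.
destruct (Nat.eq_dec n M) as [->|HnM]; [apply Rmax_r|].
eapply Rle_trans; [apply IH; lia|apply Rmax_l].
Qed.

Fixpoint supnorm_argmax (N : nat) (y : nat -> R) : nat :=
  match N with
  | O => O
  | S m => if Rle_dec (supnorm m y) (Rabs (y m)) then m else supnorm_argmax m y
  end.

Lemma supnorm_argmaxP N y : (1 <= N)%nat ->
  (supnorm_argmax N y < N)%nat /\ supnorm N y = Rabs (y (supnorm_argmax N y)).
Proof.
induction N as [|N IH]; intros HN; [lia|]. simpl.
destruct (Rle_dec (supnorm N y) (Rabs (y N))) as [Hle|Hlt].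
- split; [lia|]. apply Rmax_right, Hle.
- destruct N as [|N].
  + simpl in Hlt. pose proof (Rabs_pos (y O)). lra.
  + destruct (IH ltac:(lia)) as [_ Heq]. split; [lia|].
    rewrite <- Heq. apply Rmax_left. lra.
Qed.

Definition orthonormal_expectation (E : nat -> ((nat -> R) -> R) -> R -> Prop) : Prop :=
  forall k (c : nat -> R) v,
    E k (fun r => Rsqr (sumR k (fun j => r j * c j))) v <-> v = sumR k (fun j => Rsqr (c j)).

Section Reduction.

Variable E : nat -> ((nat -> R) -> R) -> R -> Prop.
Hypothesis E_orthonormal : orthonormal_expectation E.
Variables (M N : nat) (T : nat -> (nat -> R) -> R).
Hypothesis N_pos : (1 <= N)%nat.

Lemma Rbound_constE C : Rbound_const E M N T C <-> cotype2_const E M N (opA T) C.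
Proof.
split.
- intros HR k x b Hb.
  set (idx := fun j => supnorm_argmax N (opA T (x j))).
  assert (Hidx : forall j, (j < k)%nat -> (idx j < N)%nat)
    by (intros j _; apply supnorm_argmaxP, N_pos).
  assert (Ha := proj2 (E_orthonormal k (fun j => T (idx j) (x j)) _) eq_refl).
  replace (sumR k (fun j => Rsqr (supnorm N (opA T (x j)))))
    with (sumR k (fun j => Rsqr (T (idx j) (x j)))) by
    (apply sumR_ext; intros j _;
     rewrite (proj2 (supnorm_argmaxP N (opA T (x j)) N_pos)), <- Rsqr_abs;
     reflexivity).
  exact (HR k idx x Hidx _ _ Ha Hb).
- intros HC k idx x Hidx a b Ha Hb.
  apply E_orthonormal in Ha. subst a.
  eapply Rle_trans; [|apply (HC k x b Hb)].
  apply sqrt_le_1_alt, sumR_le. intros j Hj.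
  rewrite (Rsqr_abs (T (idx j) (x j))).
  apply Rsqr_incr_1; [apply (Rabs_le_supnorm N (opA T (x j))), Hidx, Hj
                     |apply Rabs_pos|apply supnorm_ge0].
Qed.

Lemma is_least_Rbound_constE c :
  is_least_const (Rbound_const E M N T) c <->
  is_least_const (cotype2_const E M N (opA T)) c.
Proof.
unfold is_least_const.
split; intros [Hc Hleast]; split; try (apply Rbound_constE, Hc);
  intros C HC; apply Hleast, Rbound_constE, HC.
Qed.

End Reduction.

(** * Rademacher averages *)

Lemma Erad_sqr_affine k : forall (a : R) (c : nat -> R),
  Erad k (fun r => Rsqr (a + sumR k (fun j => r j * c j))) =
  Rsqr a + sumR k (fun j => Rsqr (c j)).
Proof.
induction k as [|k IH]; intros a c; cbn [Erad]; [simpl; unfold Rsqr; ring|].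
rewrite (functional_extensionality
           (fun e => Rsqr (a + sumR (S k) (fun j => vcons 1 e j * c j)))
           (fun e => Rsqr ((a + c O) + sumR k (fun j => e j * c (S j))))).
2:{ intros e. rewrite sumR_shift. simpl. f_equal. ring. }
rewrite (functional_extensionality
           (fun e => Rsqr (a + sumR (S k) (fun j => vcons (-1) e j * c j)))
           (fun e => Rsqr ((a - c O) + sumR k (fun j => e j * c (S j))))).
2:{ intros e. rewrite sumR_shift. simpl. f_equal. ring. }
rewrite !IH, sumR_shift. unfold Rsqr. field.
Qed.

Lemma orthonormal_expectation_rad : orthonormal_expectation is_exp_rad.
Proof.
intros k c v. unfold is_exp_rad.
rewrite (functional_extensionality _ (fun r => Rsqr (0 + sumR k (fun j => r j * c j))))
  by (intros r; rewrite Rplus_0_l; reflexivity).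
rewrite Erad_sqr_affine, Rsqr_0, Rplus_0_l. apply iff_refl.
Qed.

(** * Gaussian integrals *)

Definition gauss (t : R) : R := exp (- (t * t)).

Lemma continuity_pt_gauss t : continuity_pt gauss t.
Proof.
apply derivable_continuous_pt. unfold gauss. reg.
Qed.

Lemma continuity_pt_inv_1_sqr t : continuity_pt (fun x => / (1 + x * x)) t.
Proof.
apply derivable_continuous_pt. reg. pose proof (Rle_0_sqr t). unfold Rsqr in *. lra.
Qed.

Lemma ex_RInt_continuity f a b : (forall t, continuity_pt f t) -> ex_RInt f a b.
Proof.
intros Hf. apply (ex_RInt_continuous (V:=R_CompleteNormedModule)).
intros t _. apply continuity_pt_filterlim, Hf.
Qed.

Lemma derivable_pt_lim_RInt f a x : (forall t, continuity_pt f t) ->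
  derivable_pt_lim (fun y => RInt f a y) x (f x).
Proof.
intros Hf. apply is_derive_Reals, (is_derive_RInt f (fun y => RInt f a y) a x).
- apply filter_forall. intros b.
  apply (RInt_correct (V:=R_CompleteNormedModule)), ex_RInt_continuity, Hf.
- apply continuity_pt_filterlim, Hf.
Qed.

Lemma RInt_inv_1_sqr_01 : RInt (fun x => / (1 + x * x)) 0 1 = PI / 4.
Proof.
rewrite <- atan_1. replace (atan 1) with (atan 1 - atan 0) by (rewrite atan_0; ring).
apply is_RInt_unique, (is_RInt_derive atan).
- intros x _. apply is_derive_Reals.
  replace (1 + x * x) with (1 + x ^ 2) by ring. apply derivable_pt_lim_atan.
- intros x _. apply continuity_pt_filterlim, continuity_pt_inv_1_sqr.
Qed.

Module GaussianIntegral.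
Import all_boot all_order all_algebra all_classical all_reals all_analysis.
Import Rstruct Rstruct_topology.
Import Order.TTheory GRing.Theory Num.Theory.
Import numFieldNormedType.Exports.
Local Open Scope classical_set_scope.
Local Open Scope ring_scope.

Lemma derivable_pt_lim_is_derive (f : R^o -> R^o) (x l : R^o) :
  derivable_pt_lim f x l -> is_derive x 1 f l.
Proof.
move=> H.
suff Hc : (fun h : R^o => h^-1 *: ((f \o shift x) (h *: 1) - f x)) @ 0^' --> l.
  apply: DeriveDef; first by apply/cvg_ex; exists l.
  exact/cvg_lim.
apply/cvgrPdist_lt => e /RltP e0.
have [d Hd] := H e e0.
apply/nbhs_ballP; exists (pos d); first exact/RltP/cond_pos.
move=> h /= hb /eqP hn.
have hd : (Rabs h < d)%coqR.
  by move: hb; rewrite -ball_normE /= sub0r normrN => /RltP.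
move: (Hd h hn hd) => /RltP.
by rewrite distrC /GRing.scale /= mulr1 (addrC h) mulrC.
Qed.

Lemma integral_itv_RInt (f : R -> R) a b : a < b -> (forall y, continuity_pt f y) ->
  (\int[@lebesgue_measure R]_(x in `[a, b]) (f x)%:E = (RInt f a b)%:E)%E.
Proof.
move=> ab Hf.
have D y : is_derive (y : R^o) 1 (fun z : R^o => RInt f a z : R^o) (f y).
  exact/derivable_pt_lim_is_derive/derivable_pt_lim_RInt.
have cF : continuous (fun z : R^o => RInt f a z : R^o).
  by move=> y; apply/differentiable_continuous/derivable1_diffP; case: (D y).
rewrite (@continuous_FTC2 _ f (fun z => RInt f a z) a b ab).
- by rewrite RInt_point -EFinB subr0.
- by apply: continuous_subspaceT => y; exact/continuity_pt_cvg.
- split.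
  + by move=> y _; case: (D y).
  + exact/cvg_at_right_filter/cF.
  + exact/cvg_at_left_filter/cF.
- by move=> y _; rewrite derive1E; case: (D y).
Qed.

(* Both constants are 4 times the integral of 1 / (1 + x^2) over [0, 1]. *)
Lemma pi_PI : pi = PI :> R.
Proof.
have := @integral0_oneDsqr R 1 ler01.
rewrite atan1 /Rintegral (integral_itv_RInt _ _ _ ltr01 continuity_pt_inv_1_sqr) /=.
rewrite RInt_inv_1_sqr_01 IZRposE INRE /= => E.
by apply: (@mulIf _ 4^-1); [rewrite invr_eq0 pnatr_eq0 | rewrite -E].
Qed.

Lemma integral0_gauss_RInt x : 0 < x ->
  gauss_integral_proof.integral0_gauss x = RInt gauss 0 x.
Proof.
move=> x0; rewrite /gauss_integral_proof.integral0_gauss /Rintegral.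
have -> : @gauss_fun R = gauss.
  by apply/funext => t; rewrite /gauss_fun /gauss RexpE expr2.
by rewrite (integral_itv_RInt _ _ _ x0 continuity_pt_gauss).
Qed.

Lemma RInt_gauss_sqr_cvg eps : (0 < eps)%coqR -> exists M, forall x, (M < x)%coqR ->
  (Rabs ((RInt gauss 0 x) ^ 2 - PI / 4) < eps)%coqR.
Proof.
move=> /RltP e0.
have /cvgrPdist_lt /(_ eps e0) [M [_ HM]] :=
  @gauss_integral_proof.cvg_integral0_gauss_sqr R.
exists (Rmax M 0) => x /RltP Mx.
have x0 : 0 < x by apply: le_lt_trans Mx; apply/RleP/Rmax_r.
have Mx' : M < x by apply: le_lt_trans Mx; apply/RleP/Rmax_l.
apply/RltP; move: (HM x Mx').
by rewrite integral0_gauss_RInt // pi_PI distrC RpowE RabsE IZRposE INRE.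
Qed.
End GaussianIntegral.

Lemma is_lim_RInt_gauss_sqr : is_lim (fun x => (RInt gauss 0 x) ^ 2) p_infty (PI / 4).
Proof.
apply is_lim_spec. intros eps. exact (GaussianIntegral.RInt_gauss_sqr_cvg eps (cond_pos eps)).
Qed.

Lemma is_lim_RInt_gauss : is_lim (RInt gauss 0) p_infty (sqrt PI / 2).
Proof.
assert (HPI := PI_RGT_0).
replace (sqrt PI / 2) with (sqrt (PI / 4)).
2:{ rewrite sqrt_div_alt by lra. replace 4 with (2 * 2) by ring. rewrite sqrt_square; lra. }
apply is_lim_ext_loc with (fun x => sqrt ((RInt gauss 0 x) ^ 2)).
- exists 0. intros x Hx. apply sqrt_pow2, RInt_ge_0; [lra|apply ex_RInt_continuity, continuity_pt_gauss|].
  intros t _. left. apply exp_pos.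
- apply (is_lim_comp_continuous (fun x => (RInt gauss 0 x) ^ 2) sqrt).
  + exact is_lim_RInt_gauss_sqr.
  + apply continuity_pt_filterlim, continuity_pt_sqrt. lra.
Qed.

Lemma RInt_gauss_sym b : RInt gauss (- b) b = 2 * RInt gauss 0 b.
Proof.
assert (Hex : forall u v, ex_RInt gauss u v)
  by (intros; apply ex_RInt_continuity, continuity_pt_gauss).
assert (Hodd : RInt gauss 0 (- b) = - RInt gauss 0 b).
{ replace (- b) with (-1 * b + 0) by ring.
  replace 0 with (-1 * 0 + 0) at 1 by ring.
  rewrite <- RInt_comp_lin by apply Hex.
  rewrite (RInt_ext _ (fun y => opp (gauss y))).
  - rewrite (RInt_opp (V:=R_CompleteNormedModule)) by apply Hex. reflexivity.
  - intros x _. unfold gauss, scal, opp; simpl. unfold mult; simpl.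
    replace ((-1 * x + 0) * (-1 * x + 0)) with (x * x) by ring. ring. }
rewrite <- (RInt_Chasles gauss (- b) 0 b) by apply Hex.
rewrite <- (opp_RInt_swap (V:=R_CompleteNormedModule) gauss) by apply Hex.
rewrite Hodd. unfold plus, opp; simpl. ring.
Qed.

Lemma continuity_pt_gdens t : continuity_pt gdens t.
Proof.
apply derivable_continuous_pt. unfold gdens. reg.
Qed.

Lemma RInt_gdens_sym a : RInt gdens (- a) a = 2 / sqrt PI * RInt gauss 0 (a / sqrt 2).
Proof.
assert (Hs2 := Rlt_sqrt2_0).
assert (HsP : 0 < sqrt PI) by apply sqrt_lt_R0, PI_RGT_0.
replace (2 / sqrt PI * RInt gauss 0 (a / sqrt 2))
  with (scal (/ sqrt PI) (RInt gauss (/ sqrt 2 * - a + 0) (/ sqrt 2 * a + 0))).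
2:{ replace (/ sqrt 2 * - a + 0) with (- (a / sqrt 2)) by (field; lra).
    replace (/ sqrt 2 * a + 0) with (a / sqrt 2) by (field; lra).
    rewrite RInt_gauss_sym. unfold scal; simpl. unfold mult; simpl. field. lra. }
apply is_RInt_unique.
apply (is_RInt_ext (fun t => scal (/ sqrt PI) (scal (/ sqrt 2) (gauss (/ sqrt 2 * t + 0))))).
- intros t _. unfold gdens, gauss, scal; simpl. unfold mult; simpl.
  rewrite sqrt_mult by (pose proof PI_RGT_0; lra).
  replace (- ((/ sqrt 2 * t + 0) * (/ sqrt 2 * t + 0))) with (- (t * t) / (sqrt 2 * sqrt 2))
    by (field; lra).
  rewrite sqrt_sqrt by lra. field. lra.
- apply (is_RInt_scal (V:=R_CompleteNormedModule)).
  apply (is_RInt_comp_lin (V:=R_CompleteNormedModule)).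
  apply (RInt_correct (V:=R_CompleteNormedModule)), ex_RInt_continuity, continuity_pt_gauss.
Qed.

Lemma is_lim_RInt_gdens : is_lim (fun a => RInt gdens (- a) a) p_infty 1.
Proof.
assert (Hs2 := Rlt_sqrt2_0).
assert (HsP : 0 < sqrt PI) by apply sqrt_lt_R0, PI_RGT_0.
apply (is_lim_ext (fun a => 2 / sqrt PI * RInt gauss 0 (a / sqrt 2))).
{ intros a. symmetry. apply RInt_gdens_sym. }
replace (Finite 1) with (Rbar_mult (2 / sqrt PI) (sqrt PI / 2))
  by (change (Finite (2 / sqrt PI * (sqrt PI / 2)) = Finite 1); f_equal; field; lra).
apply is_lim_scal_l, (is_lim_comp (RInt gauss 0) (fun a => a / sqrt 2) p_infty _ p_infty).
- exact is_lim_RInt_gauss.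
- apply is_lim_spec. intros B. exists (B * sqrt 2). intros a Ha.
  apply Rmult_lt_reg_r with (sqrt 2); [lra|]. unfold Rdiv. rewrite Rmult_assoc, Rinv_l; lra.
- exists 0. intros a _. discriminate.
Qed.

Lemma gdens_pos t : 0 < gdens t.
Proof. apply Rdiv_lt_0_compat; [apply exp_pos|apply sqrt_lt_R0]. pose proof PI_RGT_0. lra. Qed.

Lemma gdens_opp t : gdens (- t) = gdens t.
Proof. unfold gdens. do 3 f_equal. ring. Qed.

Lemma is_derive_gdens (t : R) : is_derive gdens t (- t * gdens t).
Proof.
assert (HsP : 0 < sqrt (2 * PI)) by (apply sqrt_lt_R0; pose proof PI_RGT_0; lra).
unfold gdens. auto_derive; [exact I|].
(* [auto_derive] leaves the raw [RinvImpl.Rinv], which [field] does not recognise. *)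
change RinvImpl.Rinv with Rinv. unfold Rdiv. field. lra.
Qed.

(* [(al + t c)^2 gdens t = (al^2 + c^2) gdens t - d/dt ((2 al c + c^2 t) gdens t)],
   since [gdens' t = - t gdens t]. *)
Lemma RInt_gdens_quadratic al c s a :
  RInt (fun t => gdens t * (Rsqr (al + t * c) + s)) (- a) a =
  (Rsqr al + (Rsqr c + s)) * RInt gdens (- a) a - 2 * Rsqr c * a * gdens a.
Proof.
set (Q := fun t => - (2 * al * c + c * c * t) * gdens t).
set (Q' := fun t => (- (c * c) + (2 * al * c + c * c * t) * t) * gdens t).
assert (HQ : forall t, is_derive Q t (Q' t)).
{ intros t. apply (is_derive_ext (fun t => - (2 * al * c + c * c * t) * gdens t));
    [reflexivity|].
  replace (Q' t) with (- (c * c) * gdens t + - (2 * al * c + c * c * t) * (- t * gdens t))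
    by (unfold Q'; ring).
  apply (is_derive_mult (fun t => - (2 * al * c + c * c * t)) gdens);
    [auto_derive; [exact I|ring]|apply is_derive_gdens|intros; apply Rmult_comm]. }
assert (HQ'c : forall t, continuous Q' t).
{ intros t. apply continuity_pt_filterlim. unfold Q'.
  apply continuity_pt_mult; [apply derivable_continuous_pt; reg|apply continuity_pt_gdens]. }
assert (Hgd : is_RInt gdens (- a) a (RInt gdens (- a) a))
  by apply (RInt_correct (V:=R_CompleteNormedModule)), ex_RInt_continuity, continuity_pt_gdens.
pose proof (is_RInt_plus _ _ _ _ _ _
  (is_RInt_scal (V:=R_CompleteNormedModule) _ _ _ (Rsqr al + (Rsqr c + s)) _ Hgd)
  (is_RInt_derive (V:=R_CompleteNormedModule) Q Q' (- a) a (fun t _ => HQ t) (fun t _ => HQ'c t)))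
  as H.
apply is_RInt_unique.
replace ((Rsqr al + (Rsqr c + s)) * RInt gdens (- a) a - 2 * Rsqr c * a * gdens a)
  with (plus (scal (Rsqr al + (Rsqr c + s)) (RInt gdens (- a) a)) (minus (Q a) (Q (- a)))).
- revert H. apply is_RInt_ext. intros t _.
  unfold Q', plus, scal; simpl. unfold mult, plus; simpl. unfold Rsqr. ring.
- unfold Q, minus, plus, opp, scal; simpl. unfold mult, plus, opp; simpl.
  rewrite gdens_opp. unfold Rsqr. ring.
Qed.

Lemma mul_gdens_le a : 0 < a -> a * gdens a <= 2 / a.
Proof.
intros Ha.
assert (Hs : 1 <= sqrt (2 * PI))
  by (apply Rle_trans with (sqrt 1); [rewrite R_sqrt.sqrt_1; lra|];
      apply sqrt_le_1_alt; pose proof PI_RGT_0; pose proof PI2_3_2; lra).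
assert (He : 1 + a * a / 2 < exp (a * a / 2))
  by (apply exp_ineq1, Rgt_not_eq, Rdiv_lt_0_compat; [nra|lra]).
assert (Hgd : gdens a * (sqrt (2 * PI) * exp (a * a / 2)) = 1).
{ unfold gdens. replace (- (a * a) / 2) with (- (a * a / 2)) by field.
  rewrite exp_Ropp. field. split; apply Rgt_not_eq; [apply exp_pos|lra]. }
pose proof (gdens_pos a).
apply Rmult_le_reg_r with (a * (sqrt (2 * PI) * exp (a * a / 2))); [nra|].
replace (a * gdens a * (a * (sqrt (2 * PI) * exp (a * a / 2)))) with (a * a)
  by (transitivity (a * a * (gdens a * (sqrt (2 * PI) * exp (a * a / 2))));
      [rewrite Hgd|]; ring).
replace (2 / a * (a * (sqrt (2 * PI) * exp (a * a / 2))))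
  with (2 * (sqrt (2 * PI) * exp (a * a / 2))) by (field; lra).
nra.
Qed.

Lemma is_lim_mul_gdens : is_lim (fun a => a * gdens a) p_infty 0.
Proof.
apply (is_lim_le_le_loc (fun _ => 0) (fun a => 2 * / a)).
- exists 0. intros a Ha. split.
  + left. apply Rmult_lt_0_compat; [lra|apply gdens_pos].
  + apply mul_gdens_le, Ha.
- apply is_lim_const.
- replace (Finite 0) with (Rbar_mult 2 (Rbar_inv p_infty)) by (simpl; f_equal; ring).
  apply is_lim_scal_l, is_lim_inv; [apply is_lim_id|discriminate].
Qed.

Lemma improper_int_is_lim (G : R -> R) (v : R) : (forall t, continuity_pt G t) ->
  is_lim (fun a => RInt G (- a) a) p_infty v -> improper_int G v.
Proof.
intros HG Hlim eps Heps.
apply is_lim_spec in Hlim.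
destruct (Hlim (mkposreal eps Heps)) as [A HA].
exists (Rmax A 0 + 1). intros a Ha.
assert (Hab : - a <= a) by (pose proof (Rmax_r A 0); lra).
exists (continuity_implies_RiemannInt Hab (fun t _ => HG t)).
rewrite <- RInt_Reals. apply HA. pose proof (Rmax_l A 0). lra.
Qed.

Lemma improper_int_unique G v w : improper_int G v -> improper_int G w -> v = w.
Proof.
intros Hv Hw. apply Rminus_diag_uniq, Rabs_eq_0.
destruct (Rle_lt_or_eq_dec 0 (Rabs (v - w)) (Rabs_pos _)) as [Hpos|Hzero]; [|auto].
exfalso.
assert (He : 0 < Rabs (v - w) / 2) by lra.
destruct (Hv _ He) as [Av HAv]. destruct (Hw _ He) as [Aw HAw].
destruct (HAv (Rmax Av Aw) (Rmax_l _ _)) as [prv Hprv].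
destruct (HAw (Rmax Av Aw) (Rmax_r _ _)) as [prw Hprw].
rewrite (RiemannInt_P5 prv prw) in Hprv.
assert (Rabs (v - w) <= Rabs (RiemannInt prw - w) + Rabs (RiemannInt prw - v)).
{ replace (v - w) with ((RiemannInt prw - w) - (RiemannInt prw - v)) by ring.
  eapply Rle_trans; [apply Rabs_triang|]. rewrite Rabs_Ropp. lra. }
lra.
Qed.

Lemma improper_int_gdens_quadratic al c s v :
  improper_int (fun t => gdens t * (Rsqr (al + t * c) + s)) v <->
  v = Rsqr al + (Rsqr c + s).
Proof.
assert (Hint : improper_int (fun t => gdens t * (Rsqr (al + t * c) + s))
                 (Rsqr al + (Rsqr c + s))).
{ apply improper_int_is_lim.
  - intros t. apply continuity_pt_mult; [apply continuity_pt_gdens|].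
    apply derivable_continuous_pt. unfold Rsqr. reg.
  - apply (is_lim_ext (fun a => (Rsqr al + (Rsqr c + s)) * RInt gdens (- a) a
                                - 2 * Rsqr c * (a * gdens a))).
    { intros a. rewrite RInt_gdens_quadratic. ring. }
    replace (Finite (Rsqr al + (Rsqr c + s)))
      with (Finite ((Rsqr al + (Rsqr c + s)) * 1 - 2 * Rsqr c * 0)) by (f_equal; ring).
    apply is_lim_minus'.
    + exact (is_lim_scal_l _ (Rsqr al + (Rsqr c + s)) _ _ is_lim_RInt_gdens).
    + exact (is_lim_scal_l _ (2 * Rsqr c) _ _ is_lim_mul_gdens). }
split; [intros Hv; exact (improper_int_unique _ _ _ Hv Hint)|intros ->; exact Hint].
Qed.

Lemma exp_gauss_sqr_affine k : forall al (c : nat -> R) v,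
  is_exp_gauss k (fun r => Rsqr (al + sumR k (fun j => r j * c j))) v <->
  v = Rsqr al + sumR k (fun j => Rsqr (c j)).
Proof.
induction k as [|k IH]; intros al c v.
- simpl. rewrite !Rplus_0_r. apply iff_refl.
- set (tail := sumR k (fun j => Rsqr (c (S j)))).
  assert (Hslice : forall t,
    (fun e => Rsqr (al + sumR (S k) (fun j => vcons t e j * c j))) =
    (fun e => Rsqr ((al + t * c O) + sumR k (fun j => e j * c (S j))))).
  { intros t. apply functional_extensionality. intros e.
    rewrite sumR_shift. simpl. f_equal. ring. }
  assert (HG : forall t G,
    is_exp_gauss k (fun e => Rsqr (al + sumR (S k) (fun j => vcons t e j * c j))) G
    <-> G = Rsqr (al + t * c O) + tail).
  { intros t G. rewrite Hslice. apply IH. }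
  rewrite sumR_shift. fold tail. cbn [is_exp_gauss]. split.
  + intros [G [HGt Hint]].
    rewrite (functional_extensionality (fun t => gdens t * G t)
               (fun t => gdens t * (Rsqr (al + t * c O) + tail))) in Hint
      by (intros t; rewrite (proj1 (HG t (G t)) (HGt t)); reflexivity).
    apply improper_int_gdens_quadratic in Hint. rewrite Hint. ring.
  + intros ->. exists (fun t => Rsqr (al + t * c O) + tail). split.
    * intros t. apply HG. reflexivity.
    * apply improper_int_gdens_quadratic. ring.
Qed.

Lemma orthonormal_expectation_gauss : orthonormal_expectation is_exp_gauss.
Proof.
intros k c v.
rewrite (functional_extensionality _ (fun r => Rsqr (0 + sumR k (fun j => r j * c j))))
  by (intros r; rewrite Rplus_0_l; reflexivity).
rewrite exp_gauss_sqr_affine, Rsqr_0, Rplus_0_l. apply iff_refl.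
Qed.

Theorem mainTheorem3 (M N : nat) (T : nat -> (nat -> R) -> R) :
  (1 <= M)%nat -> (1 <= N)%nat ->
  (forall n, (n < N)%nat -> lin_functional M (T n)) ->
  (forall c, is_least_const (Rbound_const is_exp_rad M N T) c <->
             is_least_const (cotype2_const is_exp_rad M N (opA T)) c) /\
  (forall c, is_least_const (Rbound_const is_exp_gauss M N T) c <->
             is_least_const (cotype2_const is_exp_gauss M N (opA T)) c).
Proof.
intros _ HN _. split.
- apply is_least_Rbound_constE; [apply orthonormal_expectation_rad|exact HN].
- apply is_least_Rbound_constE; [apply orthonormal_expectation_gauss|exact HN].
Qed.
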